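(* Let $\mathcal{C}$ be a binary linear code with minimum distance $d(\mathcal{C}) \ge 3$. Then $$\rho(\mathcal{C}) \le \binom{r(\mathcal{C})}{1} + \binom{r(\mathcal{C})}{2} + \cdots + \binom{r(\mathcal{C})}{d(\mathcal{C})-2}.$$
   Context: A parity-check matrix for a linear code $\mathcal{C}$ is any matrix (possibly with linearly dependent rows) whose rows span the dual code $\mathcal{C}^\perp$. $d(\mathcal{C})$ is the minimum Hamming distance. For a parity-check matrix $H$, the stopping distance $s(H)$ is the largest integer such that for every set of $s(H)-1$ or fewer columns of $H$, the projection of $H$ onto those columns contains at least one row of Hamming weight exactly one. The redundancy $r(\mathcal{C})$ is the minimum number of rows of a parity-check matrix for $\mathcal{C}$. The stopping redundancy $\rho(\mathcal{C})$ is the smallest number of rows of a parity-check matrix $H$ for $\mathcal{C}$ with $s(H) = d(\mathcal{C})$. *)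

From mathcomp Require Import all_boot all_order all_algebra.
Set Implicit Arguments. Unset Strict Implicit. Unset Printing Implicit Defensive.
Import GRing.Theory.
Local Open Scope ring_scope.

Definition codeword (k n : nat) (G : 'M['F_2]_(k, n)) (c : 'rV['F_2]_n) : Prop :=
  (c <= G)%MS.

Definition dual_word (k n : nat) (G : 'M['F_2]_(k, n)) (u : 'rV['F_2]_n) : Prop :=
  forall c, codeword G c -> c *m u^T = 0.

Definition wt (n : nat) (c : 'rV['F_2]_n) : nat := #|[set j | c 0 j != 0]|.

Definition is_min_dist (k n : nat) (G : 'M['F_2]_(k, n)) (d : nat) : Prop :=
  (exists c, [/\ codeword G c, c != 0 & wt c = d]) /\
  (forall c, codeword G c -> c != 0 -> (d <= wt c)%N).

Definition parity_check (k n m : nat) (G : 'M['F_2]_(k, n)) (H : 'M['F_2]_(m, n))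
  : Prop := forall u : 'rV['F_2]_n, (u <= H)%MS <-> dual_word G u.

Definition is_redundancy (k n : nat) (G : 'M['F_2]_(k, n)) (r : nat) : Prop :=
  (exists H : 'M['F_2]_(r, n), parity_check G H) /\
  (forall m (H : 'M['F_2]_(m, n)), parity_check G H -> (r <= m)%N).

Definition stopping_set (m n : nat) (H : 'M['F_2]_(m, n)) (S : {set 'I_n}) : Prop :=
  forall i : 'I_m, #|[set j in S | H i j != 0]| != 1%N.

(* s(H) = s : s is the largest integer such that every (nonempty) set of at most
   s-1 columns is not a stopping set. *)
Definition stopping_distance_is (m n : nat) (H : 'M['F_2]_(m, n)) (s : nat) : Prop :=
  (forall S : {set 'I_n}, S != set0 -> (#|S| <= s.-1)%N -> ~ stopping_set H S) /\
  ~ (forall S : {set 'I_n}, S != set0 -> (#|S| <= s)%N -> ~ stopping_set H S).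

Definition is_stopping_redundancy (k n : nat) (G : 'M['F_2]_(k, n)) (d rho : nat)
  : Prop :=
  (exists H : 'M['F_2]_(rho, n), parity_check G H /\ stopping_distance_is H d) /\
  (forall m (H : 'M['F_2]_(m, n)),
      parity_check G H -> stopping_distance_is H d -> (rho <= m)%N).

From mathcomp Require Import all_boot all_order all_algebra.
Set Implicit Arguments. Unset Strict Implicit. Unset Printing Implicit Defensive.
Import GRing.Theory.
Local Open Scope ring_scope.

(* Let H be a parity-check matrix with r = r(C) rows and let H' consist of all
   sums of at most d - 2 rows of H; it is again a parity-check matrix, with
   C(r,1) + ... + C(r,d-2) rows.  Any d - 1 columns of H are linearly
   independent, so for a nonempty set S of at most d - 1 columns we can pick
   |S| rows of H forming an invertible matrix B on S.  Over F_2 two distinct rows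
   of B^-1 cannot both be all-one, so some row of B^-1 has weight at most
   max(1, |S| - 1) <= d - 2; it selects a row of H' that restricts to a unit
   vector on S.  Thus no such S is a stopping set of H', while the support of
   a minimum-weight codeword is a stopping set of every parity-check matrix:
   s(H') = d. *)

Lemma F2_natr_neq0 (b : 'F_2) : b = (b != 0)%:R.
Proof. by case: b => [[|[|m]]] //= Hm; apply/val_inj. Qed.

Section Weight.
Variable n : nat.
Implicit Types c : 'rV['F_2]_n.

Definition supp c : {set 'I_n} := [set j | c 0 j != 0].

Lemma wtE c : wt c = #|supp c|.
Proof. by []. Qed.

Lemma wt_eq0 c : (wt c == 0%N) = (c == 0).
Proof.
rewrite wtE cards_eq0; apply/eqP/eqP => [c0|->]; last first.
  by apply/setP => j; rewrite !inE mxE eqxx.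
apply/rowP => j; rewrite mxE; apply/eqP; apply: contraT => cj.
by have := in_set0 j; rewrite -c0 inE cj.
Qed.

Lemma wt_le_size c : (wt c <= n)%N.
Proof. by rewrite wtE; apply: leq_trans (max_card _) _; rewrite card_ord. Qed.

Lemma wt_eq_size c : wt c = n -> c = const_mx 1.
Proof.
rewrite wtE => wt_n; have /setP supp_full : supp c = setT.
  by apply/eqP; rewrite eqEcard subsetT cardsT card_ord wt_n /=.
apply/rowP => j; rewrite mxE [c 0 j]F2_natr_neq0.
by move: (supp_full j); rewrite !inE => ->.
Qed.

Definition indicator (T : {set 'I_n}) : 'rV['F_2]_n := \row_j (j \in T)%:R.

Lemma indicator_supp c : indicator (supp c) = c.
Proof. by apply/rowP => j; rewrite mxE inE -F2_natr_neq0. Qed.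

Lemma supp_delta_mx (a : 'I_n) : supp (delta_mx 0 a) = [set a].
Proof.
apply/setP => j; rewrite !inE mxE eqxx /= eq_sym.
by case: (j == a); rewrite ?oner_eq0 ?eqxx.
Qed.

End Weight.

Section Scatter.
Variables (s r : nat) (f : 'I_s -> 'I_r).
Hypothesis f_inj : injective f.

Lemma supp_mul_rowsub1 (t : 'rV['F_2]_s) : supp (t *m rowsub f 1%:M) = f @: supp t.
Proof.
apply/setP => i; rewrite inE mxE.
under eq_bigr do rewrite !mxE.
case: (pickP [pred a | f a == i]) => [a /eqP <- | not_fi].
  rewrite (mem_imset _ _ f_inj) inE (bigD1 a) //= eqxx mulr1 big1 ?addr0 // => b ba.
  by rewrite (inj_eq f_inj) (negbTE ba) mulr0.
rewrite big1 ?eqxx => [|b _]; last by rewrite [f b == i]not_fi mulr0.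
by apply/esym/imsetP => -[a _ ia]; move: (not_fi a); rewrite /= ia eqxx.
Qed.

Lemma wt_mul_rowsub1 (t : 'rV['F_2]_s) : wt (t *m rowsub f 1%:M) = wt t.
Proof. by rewrite !wtE supp_mul_rowsub1 card_imset. Qed.

End Scatter.

Lemma supp_colsub_enum_val (n : nat) (S : {set 'I_n}) (v : 'rV['F_2]_n) :
  [set j in S | v 0 j != 0] = enum_val @: supp (colsub (@enum_val _ (mem S)) v).
Proof.
apply/setP => j; rewrite inE; case jS: (j \in S) => /=; last first.
  by apply/esym/imsetP => -[a _ ja]; move: jS; rewrite ja enum_valP.
rewrite -(enum_rankK_in jS jS) (mem_imset _ _ enum_val_inj) inE mxE.
by rewrite enum_rankK_in.
Qed.

(* Two distinct rows of [B] cannot both be the all-one vector. *)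
Lemma unitmx_row_wt_le (s : nat) (B : 'M['F_2]_s.+1) : B \in unitmx ->
  exists a, (wt (row a B) <= maxn 1 s)%N.
Proof.
case: s B => [|s] B B_unit; first by exists 0; rewrite wt_le_size.
have rowB_inj : injective (fun a => row a B).
  move=> a b; rewrite /= !rowE => /(can_inj (mulmxK B_unit))/rowP/(_ a).
  by rewrite !mxE !eqxx /=; case: (a =P b) => // _ /eqP; rewrite oner_eq0.
have [/wt_eq_size r0|lt0] := eqVneq (wt (row ord0 B)) s.+2; last first.
  exists ord0; apply: leq_trans (leq_maxr 1 _).
  by rewrite -ltnS ltn_neqAle lt0 wt_le_size.
have [/wt_eq_size rmax|ltmax] := eqVneq (wt (row ord_max B)) s.+2; last first.
  exists ord_max; apply: leq_trans (leq_maxr 1 _).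
  by rewrite -ltnS ltn_neqAle ltmax wt_le_size.
by move/rowB_inj/(congr1 val): (etrans r0 (esym rmax)).
Qed.

Lemma row_full_delta_mx_sparse (r s : nat) (M : 'M['F_2]_(r, s)) : (0 < s)%N ->
  row_full M -> exists a x, x *m M = delta_mx 0 a /\ (wt x <= maxn 1 s.-1)%N.
Proof.
case: s M => [|s] M // _ M_full.
set f := fullrankfun M_full; set B := rowsub f M.
have B_unit : B \in unitmx := fullrowsub_unit M_full.
have invB_unit : invmx B \in unitmx by rewrite unitmx_inv.
have [a wt_a] := unitmx_row_wt_le invB_unit.
exists a, (row a (invmx B) *m rowsub f 1%:M); split.
  by rewrite -mulmxA -rowsubE -row_mul mulVmx // row1.
by rewrite wt_mul_rowsub1 //; apply: fullrankfun_inj.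
Qed.

Section ParityCheck.
Variables (k n m : nat) (G : 'M['F_2]_(k, n)) (H : 'M['F_2]_(m, n)).
Hypothesis H_pc : parity_check G H.

Lemma parity_check_eqmx (m' : nat) (H' : 'M['F_2]_(m', n)) :
  (H' == H)%MS -> parity_check G H'.
Proof. by move=> /rV_eqP eqH u; rewrite eqH; apply: H_pc. Qed.

Lemma codeword_orth_parity_check (y : 'rV['F_2]_n) :
  y *m H^T = 0 -> codeword G y.
Proof.
move=> yH; rewrite /codeword submxE; apply/eqP/rowP => j.
have dual_j : dual_word G (col j (cokermx G))^T.
  move=> c /submxP [w ->].
  by rewrite trmxK colE -mulmxA (mulmxA G) mulmx_coker mul0mx mulmx0.
have /submxP [w Hw] := (proj2 (H_pc _) dual_j).
have : y *m col j (cokermx G) = 0 by rewrite -[col j _]trmxK Hw trmx_mul mulmxA yH mul0mx.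
by move=> /rowP /(_ 0); rewrite colE mulmxA -colE !mxE.
Qed.

Lemma row_full_colsub_lt_dist (d s : nat) (g : 'I_s -> 'I_n) :
  (forall c, codeword G c -> c != 0 -> (d <= wt c)%N) ->
  injective g -> (s < d)%N -> row_full (colsub g H).
Proof.
move=> min_wt g_inj s_lt_d; rewrite /row_full -mxrank_tr; apply: inj_row_free => v vH.
have y_cw : codeword G (v *m rowsub g 1%:M).
  apply: codeword_orth_parity_check; rewrite -mulmxA -rowsubE -{}[RHS]vH.
  by congr (_ *m _); apply/matrixP => i j; rewrite !mxE.
apply/eqP; rewrite -wt_eq0 -(wt_mul_rowsub1 g_inj) wt_eq0.
apply: contraLR s_lt_d => y_neq0; rewrite -leqNgt (leq_trans (min_wt _ y_cw y_neq0)) //.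
by rewrite (wt_mul_rowsub1 g_inj) wt_le_size.
Qed.

Lemma supp_codeword_stopping_set (c : 'rV['F_2]_n) :
  codeword G c -> stopping_set H (supp c).
Proof.
move=> c_cw i; apply/eqP => one_common.
have /rowP /(_ 0) := proj1 (H_pc _) (row_sub i H) c c_cw.
set A := [set j in supp c | H i j != 0].
rewrite !mxE (eq_bigr (fun j => if j \in A then 1 else 0)) => [|j _]; last first.
  rewrite !mxE !inE {1}[c 0 j]F2_natr_neq0 {1}[H i j]F2_natr_neq0.
  by case: (c 0 j != 0); case: (H i j != 0); rewrite ?mulr1 ?mulr0.
by rewrite -big_mkcond sumr_const one_common => /eqP; rewrite oner_eq0.
Qed.

Lemma stopping_distance_is_min_dist (d : nat) :
  is_min_dist G d ->
  (forall S : {set 'I_n}, S != set0 -> (#|S| <= d.-1)%N -> ~ stopping_set H S) ->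
  stopping_distance_is H d.
Proof.
move=> [[c [c_cw c_neq0 wt_c]] _] no_small_stopping; split => // no_stopping.
apply: (no_stopping (supp c)); last exact: supp_codeword_stopping_set.
  by rewrite -card_gt0 -wtE lt0n wt_eq0.
by rewrite -wtE wt_c.
Qed.

End ParityCheck.

Definition small_subsets (r m : nat) : {set {set 'I_r}} :=
  [set T : {set 'I_r} | (0 < #|T| <= m)%N].

Lemma card_small_subsets (r m : nat) :
  #|small_subsets r m| = (\sum_(1 <= i < m.+1) 'C(r, i))%N.
Proof.
elim: m => [|m IHm].
  rewrite big_geq //; apply/eqP; rewrite cards_eq0.
  by apply/eqP/setP => T; rewrite !inE; case: #|T|.
set layer := [set T : {set 'I_r} | #|T| == m.+1].
have -> : small_subsets r m.+1 = small_subsets r m :|: layer.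
  apply/setP => T; rewrite !inE [(#|T| <= _)%N]leq_eqVlt ltnS.
  by case: eqP => [->|_]; rewrite ?orbT ?orbF.
rewrite cardsU big_nat_recr //= IHm card_draws card_ord.
suff -> : small_subsets r m :&: layer = set0 by rewrite cards0 subn0.
apply/setP => T; rewrite !inE.
by case/boolP: (#|T| == m.+1) => [/eqP ->|]; rewrite ?ltnn !andbF.
Qed.

Definition subset_sum_mx (r n m : nat) (H : 'M['F_2]_(r, n)) :
  'M['F_2]_(#|small_subsets r m|, n) :=
  \matrix_(a < #|small_subsets r m|) (indicator (enum_val a) *m H).

Section SubsetSums.
Variables (k n r m : nat) (G : 'M['F_2]_(k, n)) (H : 'M['F_2]_(r, n)).
Hypothesis H_pc : parity_check G H.
Hypothesis m_gt0 : (0 < m)%N.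

Lemma subset_sum_mx_eqmx : (subset_sum_mx m H == H)%MS.
Proof.
apply/andP; split; apply/row_subP => i; first by rewrite rowK submxMl.
have iS : [set i] \in small_subsets r m by rewrite inE cards1.
have -> : row i H = row (enum_rank_in iS [set i]) (subset_sum_mx m H).
  rewrite rowK enum_rankK_in // rowE; congr (_ *m _).
  by apply/rowP => j; rewrite !mxE inE eq_sym.
exact: row_sub.
Qed.

Lemma subset_sum_mx_parity_check : parity_check G (subset_sum_mx m H).
Proof. exact: parity_check_eqmx H_pc _ _ subset_sum_mx_eqmx. Qed.

Lemma subset_sum_mx_not_stopping_set (S : {set 'I_n}) :
  (forall c, codeword G c -> c != 0 -> (m.+2 <= wt c)%N) ->
  S != set0 -> (#|S| <= m.+1)%N -> ~ stopping_set (subset_sum_mx m H) S.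
Proof.
move=> min_wt S_neq0 S_le stop.
have S_gt0 : (0 < #|S|)%N by rewrite card_gt0.
have HS_full := row_full_colsub_lt_dist H_pc min_wt enum_val_inj S_le.
have [a [x [xHS wt_x]]] := row_full_delta_mx_sparse S_gt0 HS_full.
have x_neq0 : x != 0.
  apply/eqP => x0; move: xHS; rewrite x0 mul0mx => /rowP /(_ a).
  by rewrite !mxE !eqxx => /eqP; rewrite eq_sym oner_eq0.
have xS : supp x \in small_subsets r m.
  rewrite inE -wtE lt0n wt_eq0 x_neq0 (leq_trans wt_x) // geq_max m_gt0.
  by rewrite -ltnS prednK.
set b := enum_rank_in xS (supp x).
have S_row_b : [set j in S | subset_sum_mx m H b j != 0] = [set enum_val a].
  have -> : [set j in S | subset_sum_mx m H b j != 0] = [set j in S | (x *m H) 0 j != 0].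
    by apply/setP => j; rewrite !inE mxE enum_rankK_in // indicator_supp.
  by rewrite supp_colsub_enum_val -mulmx_colsub xHS supp_delta_mx imset_set1.
by move: (stop b); rewrite S_row_b cards1.
Qed.

End SubsetSums.

Theorem theorem4 (k n : nat) (G : 'M['F_2]_(k, n)) (d r rho : nat) :
  is_min_dist G d -> (3 <= d)%N ->
  is_redundancy G r ->
  is_stopping_redundancy G d rho ->
  (rho <= \sum_(1 <= i < d.-1) 'C(r, i))%N.
Proof.
move=> md d_ge3 [[H H_pc] _] [_ rho_min].
case: d d_ge3 md rho_min => [|[|[|m]]] // _ md rho_min.
have HS_pc := subset_sum_mx_parity_check H_pc (ltn0Sn m).
rewrite -card_small_subsets; apply: (rho_min _ _ HS_pc).
apply: (stopping_distance_is_min_dist HS_pc md) => S.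
exact: subset_sum_mx_not_stopping_set H_pc (ltn0Sn m) S (proj2 md).
Qed.
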